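(* Let $L,R$ be nonempty subsets of a group $G$ such that $\mathcal{W}(L)$ and $\mathcal{W}(R)$ are subgroups of $G$, let $s\in G$, and let $k_s$ be the minimum strong connection length in $\langle L\rangle s\langle R\rangle$. If $k_s$ is finite, the double coset $\langle L\rangle s\langle R\rangle$ is the union of exactly $k_s$ strongly connected components of $2\mathrm{S}(G;L,R)$, all of the same cardinality; if $k_s$ is infinite it is the union of infinitely many strongly connected components. Moreover, if $k_s$ is finite and $L\cap N_G(L)\neq\emptyset$ or $R\cap N_G(R)\neq\emptyset$, then all strongly connected components contained in $\langle L\rangle s\langle R\rangle$ are isomorphic as digraphs.
   Context: For nonempty subsets $L,R$ of a group $G$, the two-sided group digraph $2\mathrm{S}(G;L,R)$ has vertex set $G$ and a directed arc $(g,h)$ if and only if $h=l^{-1}gr$ for some $l\in L$, $r\in R$. For nonempty $S$, $\mathcal{W}(S)$ is the set of elements expressible as finite products $s_1\cdots s_n$, $n\ge1$, $s_i\in S$. $g$ is strongly connected to $h$ if there are directed paths from $g$ to $h$ and from $h$ to $g$. Assuming $\mathcal{W}(L),\mathcal{W}(R)$ are subgroups, the minimum strong connection length $k_s$ in $\langle L\rangle s\langle R\rangle$ is the minimum positive length of a word $w$ whose letters all lie in $L$ or all lie in $L^{-1}$ such that $ws$ is strongly connected to $s$ (equivalently, the minimum positive length of a word $w$ with letters all in $R$ or all in $R^{-1}$ such that $sw$ is strongly connected to $s$); it is infinite if no such word exists. $N_G(L)=\{g\in G:g^{-1}Lg=L\}$. *)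

(* G may be an infinite group, so we use an abstract group record. *)
From Stdlib Require Import Relations Arith.

Record group := Group {
  gcar :> Type;
  gmul : gcar -> gcar -> gcar;
  gone : gcar;
  ginv : gcar -> gcar;
  gmulA : forall x y z, gmul x (gmul y z) = gmul (gmul x y) z;
  gmul1 : forall x, gmul gone x = x;
  gmulV : forall x, gmul (ginv x) x = gone
}.

Arguments gmul {g}. Arguments gone {g}. Arguments ginv {g}.

Section Defs.
Variable G : group.
Implicit Types (L R S H : G -> Prop) (g h x y s : G).

Definition is_subgroup H : Prop :=
  H gone /\ (forall x y, H x -> H y -> H (gmul x y)) /\ (forall x, H x -> H (ginv x)).

Inductive Wd S : G -> Prop :=
  | Wd_one : forall s, S s -> Wd S s
  | Wd_cons : forall s x, S s -> Wd S x -> Wd S (gmul s x).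

Inductive gen S : G -> Prop :=
  | gen_1 : gen S gone
  | gen_mul : forall s x, S s -> gen S x -> gen S (gmul s x)
  | gen_mulV : forall s x, S s -> gen S x -> gen S (gmul (ginv s) x).

Definition arc L R g h : Prop :=
  exists l r, L l /\ R r /\ h = gmul (gmul (ginv l) g) r.

Definition reach L R : relation G := clos_refl_trans G (arc L R).

Definition strongly_connected L R g h : Prop := reach L R g h /\ reach L R h g.

Definition dcoset L R s x : Prop :=
  exists a b, gen L a /\ gen R b /\ x = gmul (gmul a s) b.

Inductive word_len (P : G -> Prop) : nat -> G -> Prop :=
  | wl_0 : word_len P 0 gone
  | wl_S : forall n p w, P p -> word_len P n w -> word_len P (Datatypes.S n) (gmul p w).

Definition invset (P : G -> Prop) : G -> Prop := fun y => P (ginv y).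

Definition conn_len L R s (n : nat) : Prop :=
  0 < n /\ exists w, (word_len L n w \/ word_len (invset L) n w) /\
                     strongly_connected L R (gmul w s) s.

Definition min_conn_len L R s (k : nat) : Prop :=
  conn_len L R s k /\ forall n, conn_len L R s n -> k <= n.

Definition conn_len_infinite L R s : Prop := forall n, ~ conn_len L R s n.

Definition normalizer (P : G -> Prop) (g : G) : Prop :=
  (forall p, P p -> P (gmul (gmul (ginv g) p) g)) /\
  (forall p, P p -> exists q, P q /\ p = gmul (gmul (ginv g) q) g).

Definition scc L R a : G -> Prop := fun x => strongly_connected L R a x.

Definition equipotent (A B : G -> Prop) : Prop :=
  exists (f : sig A -> sig B) (f' : sig B -> sig A),
    (forall u, f' (f u) = u) /\ (forall v, f (f' v) = v).

Definition digraph_iso L R (A B : G -> Prop) : Prop :=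
  exists (f : sig A -> sig B) (f' : sig B -> sig A),
    (forall u, f' (f u) = u) /\ (forall v, f (f' v) = v) /\
    (forall u v, arc L R (proj1_sig u) (proj1_sig v) <->
                 arc L R (proj1_sig (f u)) (proj1_sig (f v))).

End Defs.

From Stdlib Require Import Relations Arith Lia ProofIrrelevance Setoid.

(* Strong connectivity in 2S(G;L,R) is the relation x ~ u^-1 x v, where u and v are products
   of equally many letters of L and of R.  Because W(L) and W(R) are groups, these "balanced"
   pairs (u, v) form a group: reachability is therefore symmetric, ~ is an equivalence, and it
   is preserved by left multiplication by L^{+-1} and right multiplication by R^{+-1}, since
   conjugating a balanced pair by a letter keeps it balanced.

   Fix l0 in L.  The arcs l x -> x r give l x ~ x r ~ l' x, so every element of <L> s <R> is
   linked to some l0^j s, and for i < j we have l0^i s ~ l0^j s exactly when j - i is a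
   connection length.  Thus l0^0 s, ..., l0^(k_s - 1) s represent the components of the double
   coset without repetition, and all l0^j s lie in distinct components when k_s is infinite.
   Multiplying on the left by powers of l0 carries these components onto one another; when
   some l in L normalizes L (or r in R normalizes R), x |-> l x (or x |-> x r) is moreover an
   automorphism of the digraph sending the component of l0^j s to that of l0^(j+1) s. *)


Section TwoSidedGroupDigraph.
Variable G : group.
Local Infix "**" := (@gmul G) (at level 40, left associativity).
Local Notation "1" := (@gone G).
Local Notation inv := (@ginv G).

Lemma mulgA (x y z : G) : x ** (y ** z) = x ** y ** z.
Proof. apply gmulA. Qed.
Lemma mul1g (x : G) : 1 ** x = x.
Proof. apply gmul1. Qed.
Lemma mulVg (x : G) : inv x ** x = 1.
Proof. apply gmulV. Qed.
Lemma mulKg (x y : G) : inv x ** (x ** y) = y.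
Proof. rewrite mulgA, mulVg, mul1g. reflexivity. Qed.
Lemma mulgV (x : G) : x ** inv x = 1.
Proof.
  rewrite <- (mulKg (inv x) (x ** inv x)).
  rewrite (mulgA (inv x) x (inv x)), mulVg, mul1g, mulVg. reflexivity.
Qed.
Lemma mulg1 (x : G) : x ** 1 = x.
Proof. rewrite <- (mulVg x), mulgA, mulgV, mul1g. reflexivity. Qed.
Lemma mulKVg (x y : G) : x ** (inv x ** y) = y.
Proof. rewrite mulgA, mulgV, mul1g. reflexivity. Qed.
Lemma mulgK (x y : G) : y ** x ** inv x = y.
Proof. rewrite <- mulgA, mulgV, mulg1. reflexivity. Qed.
Lemma mulgKV (x y : G) : y ** inv x ** x = y.
Proof. rewrite <- mulgA, mulVg, mulg1. reflexivity. Qed.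
Lemma mulg_eq1_inv (x y : G) : x ** y = 1 -> y = inv x.
Proof. intro H. rewrite <- (mulKg x y), H, mulg1. reflexivity. Qed.
Lemma invgK (x : G) : inv (inv x) = x.
Proof. symmetry. apply mulg_eq1_inv, mulVg. Qed.
Lemma invMg (x y : G) : inv (x ** y) = inv y ** inv x.
Proof.
  symmetry. apply mulg_eq1_inv.
  rewrite <- mulgA, (mulgA y (inv y)), mulgV, mul1g, mulgV. reflexivity.
Qed.
Lemma invg1 : inv 1 = 1.
Proof. symmetry. apply mulg_eq1_inv, mul1g. Qed.

Ltac group_simpl := repeat (rewrite ?invMg, ?invgK, ?invg1; rewrite <- ?mulgA;
  rewrite ?mulKg, ?mulKVg, ?mul1g, ?mulg1, ?mulgV, ?mulVg).

Lemma iter_cancel (f f' : G -> G) d x :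
  (forall y, f' (f y) = y) -> Nat.iter d f' (Nat.iter d f x) = x.
Proof.
  intro H. induction d as [|d IH]; [reflexivity|].
  rewrite Nat.iter_succ_r, Nat.iter_succ, H. exact IH.
Qed.

Lemma iter_mulg_one g n x : Nat.iter n (gmul g) 1 ** x = Nat.iter n (gmul g) x.
Proof.
  induction n as [|n IH]; simpl; [apply mul1g|]. rewrite <- mulgA, IH. reflexivity.
Qed.

Section Words.
Variable P : G -> Prop.

Lemma word_len_cat n m w w' :
  word_len G P n w -> word_len G P m w' -> word_len G P (n + m) (w ** w').
Proof.
  induction 1; intros Hw'; simpl.
  - rewrite mul1g. exact Hw'.
  - rewrite <- mulgA. constructor; auto.
Qed.

Lemma word_len1_mul n q : word_len G P n 1 -> word_len G P (q * n) 1.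
Proof.
  intro H. induction q as [|q IH]; simpl; [constructor|].
  rewrite <- (mul1g 1). apply word_len_cat; assumption.
Qed.

Lemma Wd_word_len x : Wd G P x -> exists n, word_len G P (S n) x.
Proof.
  induction 1 as [p Hp|p x Hp _ [n Hn]].
  - exists 0. rewrite <- (mulg1 p). constructor; [assumption|constructor].
  - exists (S n). constructor; assumption.
Qed.

Lemma word_len_invg_letter p : is_subgroup G (Wd G P) -> P p ->
  exists n, word_len G P (S n) (inv p) /\ word_len G P (S (S n)) 1.
Proof.
  intros [_ [_ HWinv]] Hp.
  destruct (Wd_word_len _ (HWinv _ (Wd_one G P p Hp))) as [n Hn].
  exists n. split; [assumption|].
  rewrite <- (mulgV p). constructor; assumption.
Qed.

Lemma gen_mulg x y : gen G P x -> gen G P y -> gen G P (x ** y).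
Proof.
  induction 1; intros Hy.
  - rewrite mul1g. exact Hy.
  - rewrite <- mulgA. apply gen_mul; auto.
  - rewrite <- mulgA. apply gen_mulV; auto.
Qed.

Lemma gen_letter p : P p -> gen G P p.
Proof. intro Hp. rewrite <- (mulg1 p). apply gen_mul; [assumption|constructor]. Qed.

Lemma gen_invg x : gen G P x -> gen G P (inv x).
Proof.
  induction 1 as [|p x Hp _ IH|p x Hp _ IH]; rewrite ?invg1, ?invMg; [constructor| |].
  - apply gen_mulg; [exact IH|]. rewrite <- (mulg1 (inv p)). apply gen_mulV; [assumption|constructor].
  - rewrite invgK. apply gen_mulg; [exact IH|apply gen_letter; assumption].
Qed.

End Words.

Section Linking.
Variables L R : G -> Prop.
Hypothesis hWL : is_subgroup G (Wd G L).
Hypothesis hWR : is_subgroup G (Wd G R).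

(* A path of length n from x in 2S(G;L,R) ends at u^-1 x v for some paired word (u,v) of length n. *)
Inductive paired_word : nat -> G -> G -> Prop :=
  | pw_nil : paired_word 0 1 1
  | pw_cons n l r u v : L l -> R r -> paired_word n u v ->
      paired_word (S n) (l ** u) (r ** v).

Definition balanced u v := exists n, paired_word n u v.

Definition linked x y := exists u v, balanced u v /\ y = inv u ** x ** v.

Lemma paired_word_cat n m u v u' v' :
  paired_word n u v -> paired_word m u' v' -> paired_word (n + m) (u ** u') (v ** v').
Proof.
  induction 1; intros H'; simpl.
  - rewrite !mul1g. exact H'.
  - rewrite <- !mulgA. constructor; auto.
Qed.

Lemma paired_word_of_word_len n u v :
  word_len G L n u -> word_len G R n v -> paired_word n u v.
Proof.
  intro Hu; revert v; induction Hu; intros v' Hv; inversion Hv; subst; constructor; auto.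
Qed.

Lemma paired_word_gen n u v : paired_word n u v -> gen G L u /\ gen G R v.
Proof.
  induction 1 as [|n l r u v Hl Hr _ [Hu Hv]]; [split; constructor|].
  split; apply gen_mul; assumption.
Qed.

Lemma balanced1 : balanced 1 1.
Proof. exists 0. constructor. Qed.

Lemma balancedM u v u' v' : balanced u v -> balanced u' v' -> balanced (u ** u') (v ** v').
Proof. intros [n H] [m H']. exists (n + m). apply paired_word_cat; assumption. Qed.

Lemma balanced_letter l r : L l -> R r -> balanced l r.
Proof.
  intros Hl Hr. exists 1%nat. rewrite <- (mulg1 l), <- (mulg1 r).
  constructor; [assumption|assumption|constructor].
Qed.

(* [l^-1] and [r^-1] are words of lengths [p+1] and [q+1], and [1] is a word of length [p+2]
   in [L] and [q+2] in [R]; padding with [1] equalises the lengths. *)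
Lemma balancedV_letter l r : L l -> R r -> balanced (inv l) (inv r).
Proof.
  intros Hl Hr.
  destruct (word_len_invg_letter _ _ hWL Hl) as [p [Hp HL1]].
  destruct (word_len_invg_letter _ _ hWR Hr) as [q [Hq HR1]].
  exists (S p + S q * S (S p)). apply paired_word_of_word_len.
  - rewrite <- (mulg1 (inv l)). apply word_len_cat; [|apply word_len1_mul]; assumption.
  - replace (S p + S q * S (S p)) with (S q + S p * S (S q)) by lia.
    rewrite <- (mulg1 (inv r)). apply word_len_cat; [|apply word_len1_mul]; assumption.
Qed.

Lemma balancedV u v : balanced u v -> balanced (inv u) (inv v).
Proof.
  intros [n H]. induction H.
  - rewrite invg1. apply balanced1.
  - rewrite !invMg. apply balancedM; [|apply balancedV_letter]; assumption.
Qed.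

Lemma balanced_conj a b u v :
  balanced a b -> balanced u v -> balanced (a ** u ** inv a) (b ** v ** inv b).
Proof. intros. apply balancedM; [apply balancedM|apply balancedV]; assumption. Qed.

Lemma linked_refl x : linked x x.
Proof. exists 1, 1. split; [apply balanced1|]. group_simpl. reflexivity. Qed.

Lemma linked_sym x y : linked x y -> linked y x.
Proof.
  intros [u [v [Huv ->]]]. exists (inv u), (inv v).
  split; [apply balancedV; assumption|]. group_simpl. reflexivity.
Qed.

Lemma linked_trans x y z : linked x y -> linked y z -> linked x z.
Proof.
  intros [u [v [Huv ->]]] [u' [v' [Huv' ->]]]. exists (u ** u'), (v ** v').
  split; [apply balancedM; assumption|]. group_simpl. reflexivity.
Qed.

#[local] Instance linked_Equivalence : Equivalence linked.
Proof. split; [exact linked_refl|exact linked_sym|exact linked_trans]. Qed.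

Lemma arc_linked x y : arc G L R x y -> linked x y.
Proof.
  intros [l [r [Hl [Hr ->]]]]. exists l, r. split; [apply balanced_letter|]; auto.
Qed.

Lemma reach_linked x y : reach G L R x y -> linked x y.
Proof.
  induction 1; [apply arc_linked; assumption|reflexivity|etransitivity; eassumption].
Qed.

Lemma linked_reach x y : linked x y -> reach G L R x y.
Proof.
  intros [u [v [[n H] ->]]]. revert x. induction H as [|n l r u v Hl Hr _ IH]; intro x.
  - group_simpl. apply rt_refl.
  - apply rt_trans with (inv l ** x ** r); [apply rt_step; exists l, r; auto|].
    replace (inv (l ** u) ** x ** (r ** v)) with (inv u ** (inv l ** x ** r) ** v)
      by (group_simpl; reflexivity).
    apply IH.
Qed.

Lemma strongly_connected_linked x y : strongly_connected G L R x y <-> linked x y.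
Proof.
  split; [intros [H _]; apply reach_linked, H|].
  intro H. split; apply linked_reach; [|symmetry]; exact H.
Qed.

Lemma linked_map (T : G -> G) : (forall x y, arc G L R x y -> arc G L R (T x) (T y)) ->
  forall x y, linked x y -> linked (T x) (T y).
Proof.
  intros HT x y H. apply reach_linked. apply linked_reach in H.
  induction H; [apply rt_step, HT; assumption|apply rt_refl|eapply rt_trans; eassumption].
Qed.

(* The map [x |-> c x d^-1] sends [u^-1 x v] to [(c u c^-1)^-1 (c x d^-1) (d v d^-1)]. *)
Lemma linked_conj c d x y :
  (forall l r, L l -> R r -> balanced (c ** l ** inv c) (d ** r ** inv d)) ->
  linked x y -> linked (c ** x ** inv d) (c ** y ** inv d).
Proof.
  intros Hcd [u [v [[n H] ->]]]. exists (c ** u ** inv c), (d ** v ** inv d). split.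
  - induction H as [|n l r u v Hl Hr _ IH].
    + group_simpl. apply balanced1.
    + replace (c ** (l ** u) ** inv c) with (c ** l ** inv c ** (c ** u ** inv c))
        by (group_simpl; reflexivity).
      replace (d ** (r ** v) ** inv d) with (d ** r ** inv d ** (d ** v ** inv d))
        by (group_simpl; reflexivity).
      apply balancedM; auto.
  - group_simpl. reflexivity.
Qed.

Lemma linked_mull l x y : L l -> linked x y -> linked (l ** x) (l ** y).
Proof.
  intros Hl H. rewrite <- (mulg1 (l ** x)), <- (mulg1 (l ** y)), <- invg1.
  apply linked_conj; [|exact H]. intros l' r Hl' Hr.
  replace (1 ** r ** inv 1) with (r ** r ** inv r) by (group_simpl; reflexivity).
  apply balanced_conj; apply balanced_letter; assumption.
Qed.

Lemma linked_mulVl l x y : L l -> linked x y -> linked (inv l ** x) (inv l ** y).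
Proof.
  intros Hl H. rewrite <- (mulg1 (inv l ** x)), <- (mulg1 (inv l ** y)), <- invg1.
  apply linked_conj; [|exact H]. intros l' r Hl' Hr.
  replace (1 ** r ** inv 1) with (inv r ** r ** inv (inv r)) by (group_simpl; reflexivity).
  apply balanced_conj; [apply balancedV_letter|apply balanced_letter]; assumption.
Qed.

Lemma linked_mulr r x y : R r -> linked x y -> linked (x ** r) (y ** r).
Proof.
  intros Hr H.
  replace (x ** r) with (1 ** x ** inv (inv r)) by (group_simpl; reflexivity).
  replace (y ** r) with (1 ** y ** inv (inv r)) by (group_simpl; reflexivity).
  apply linked_conj; [|exact H]. intros l r' Hl Hr'.
  replace (1 ** l ** inv 1) with (inv l ** l ** inv (inv l)) by (group_simpl; reflexivity).
  apply balanced_conj; [apply balancedV_letter|apply balanced_letter]; assumption.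
Qed.

Lemma linked_mulVr r x y : R r -> linked x y -> linked (x ** inv r) (y ** inv r).
Proof.
  intros Hr H.
  replace (x ** inv r) with (1 ** x ** inv r) by (group_simpl; reflexivity).
  replace (y ** inv r) with (1 ** y ** inv r) by (group_simpl; reflexivity).
  apply linked_conj; [|exact H]. intros l r' Hl Hr'.
  replace (1 ** l ** inv 1) with (l ** l ** inv l) by (group_simpl; reflexivity).
  apply balanced_conj; apply balanced_letter; assumption.
Qed.

Lemma linked_mull_mulr l r z : L l -> R r -> linked (l ** z) (z ** r).
Proof. intros Hl Hr. apply arc_linked. exists l, r. split; [|split]; auto. group_simpl. reflexivity. Qed.

Lemma linked_mulVr_mulVl l r z : L l -> R r -> linked (z ** inv r) (inv l ** z).
Proof. intros Hl Hr. apply arc_linked. exists l, r. split; [|split]; auto. group_simpl. reflexivity. Qed.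

Lemma dcoset_linked s x y : dcoset G L R s x -> linked x y -> dcoset G L R s y.
Proof.
  intros [a [b [Ha [Hb ->]]]] [u [v [[n H] ->]]].
  destruct (paired_word_gen _ _ _ H) as [Hu Hv].
  exists (inv u ** a), (b ** v). split; [|split].
  - apply gen_mulg; [apply gen_invg|]; assumption.
  - apply gen_mulg; assumption.
  - group_simpl. reflexivity.
Qed.

Lemma iter_linked (f : G -> G) d x y : (forall x y, linked x y -> linked (f x) (f y)) ->
  linked x y -> linked (Nat.iter d f x) (Nat.iter d f y).
Proof. intros Hf H. induction d; simpl; auto. Qed.

Lemma iter_arc (T : G -> G) d : (forall x y, arc G L R x y <-> arc G L R (T x) (T y)) ->
  forall x y, arc G L R x y <-> arc G L R (Nat.iter d T x) (Nat.iter d T y).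
Proof. intros HT x y. induction d; simpl; [tauto|]. rewrite <- HT. assumption. Qed.

Lemma arc_mull_normalizer g : normalizer G L g ->
  forall x y, arc G L R x y <-> arc G L R (g ** x) (g ** y).
Proof.
  intros [HgL HLg] x y. split.
  - intros [l [r [Hl [Hr ->]]]]. destruct (HLg l Hl) as [q [Hq ->]].
    exists q, r. split; [|split]; auto. group_simpl. reflexivity.
  - intros [q [r [Hq [Hr Hy]]]]. exists (inv g ** q ** g), r. split; [|split]; auto.
    rewrite <- (mulKg g y), Hy. group_simpl. reflexivity.
Qed.

Lemma arc_mulr_normalizer g : normalizer G R g ->
  forall x y, arc G L R x y <-> arc G L R (x ** g) (y ** g).
Proof.
  intros [HgR HRg] x y. split.
  - intros [l [r [Hl [Hr ->]]]]. exists l, (inv g ** r ** g). split; [|split]; auto.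
    group_simpl. reflexivity.
  - intros [l [q [Hl [Hq Hy]]]]. destruct (HRg q Hq) as [r [Hr ->]].
    exists l, r. split; [|split]; auto.
    rewrite <- (mulgK g y), Hy. group_simpl. reflexivity.
Qed.

Lemma scc_transport a b (T T' : G -> G) :
  (forall x, T' (T x) = x) -> (forall x, T (T' x) = x) ->
  (forall x y, linked x y -> linked (T x) (T y)) ->
  (forall x y, linked x y -> linked (T' x) (T' y)) ->
  linked (T a) b ->
  exists (f : sig (scc G L R a) -> sig (scc G L R b)) (f' : sig (scc G L R b) -> sig (scc G L R a)),
    (forall u, f' (f u) = u) /\ (forall v, f (f' v) = v) /\
    (forall u, proj1_sig (f u) = T (proj1_sig u)).
Proof.
  intros HT'T HTT' HT HT' Hab.
  assert (Hf : forall x, scc G L R a x -> scc G L R b (T x)).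
  { unfold scc. intros x Hx. apply strongly_connected_linked in Hx.
    apply strongly_connected_linked. rewrite <- Hab. apply HT, Hx. }
  assert (Hf' : forall y, scc G L R b y -> scc G L R a (T' y)).
  { unfold scc. intros y Hy. apply strongly_connected_linked in Hy.
    apply strongly_connected_linked. rewrite <- (HT'T a). apply HT'. rewrite Hab. exact Hy. }
  exists (fun u => exist _ (T (proj1_sig u)) (Hf _ (proj2_sig u))),
         (fun v => exist _ (T' (proj1_sig v)) (Hf' _ (proj2_sig v))).
  split; [|split; [|reflexivity]]; intros [x Hx]; simpl.
  - generalize (Hf' (T x) (Hf x Hx)). rewrite HT'T. intro. f_equal. apply proof_irrelevance.
  - generalize (Hf (T' x) (Hf' x Hx)). rewrite HTT'. intro. f_equal. apply proof_irrelevance.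
Qed.

Lemma equipotent_sym A B : equipotent G A B -> equipotent G B A.
Proof. intros [f [f' [H1 H2]]]. exists f', f. auto. Qed.

Lemma digraph_iso_sym A B : digraph_iso G L R A B -> digraph_iso G L R B A.
Proof.
  intros [f [f' [H1 [H2 H3]]]]. exists f', f. split; [|split]; auto.
  intros u v. rewrite (H3 (f' u) (f' v)), !H2. tauto.
Qed.

Section Representatives.
Variables l0 r0 s : G.
Hypothesis Hl0 : L l0.
Hypothesis Hr0 : R r0.

Definition rep n := Nat.iter n (gmul l0) s.

Lemma linked_mull_letters l l' z : L l -> L l' -> linked (l ** z) (l' ** z).
Proof.
  intros Hl Hl'. etransitivity; [apply (linked_mull_mulr l r0)|symmetry; apply linked_mull_mulr];
  assumption.
Qed.

Lemma linked_mulVl_letters l l' z : L l -> L l' -> linked (inv l ** z) (inv l' ** z).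
Proof.
  intros Hl Hl'. etransitivity; [symmetry; apply (linked_mulVr_mulVl l r0)|apply linked_mulVr_mulVl];
  assumption.
Qed.

Lemma word_len_linked n w x : word_len G L n w -> linked (w ** x) (Nat.iter n (gmul l0) x).
Proof.
  induction 1 as [|n p w Hp _ IH]; [rewrite mul1g; reflexivity|].
  rewrite Nat.iter_succ, <- mulgA. etransitivity; [apply (linked_mull_letters p l0); assumption|].
  apply linked_mull; assumption.
Qed.

Lemma word_len_invset_linked n w x :
  word_len G (invset G L) n w -> linked (w ** x) (Nat.iter n (gmul (inv l0)) x).
Proof.
  induction 1 as [|n p w Hp _ IH]; [rewrite mul1g; reflexivity|].
  rewrite Nat.iter_succ, <- mulgA, <- (invgK p) at 1.
  etransitivity; [apply (linked_mulVl_letters (inv p) l0); assumption|].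
  apply linked_mulVl; assumption.
Qed.

Lemma word_len_iter_mulg n : word_len G L n (Nat.iter n (gmul l0) 1).
Proof. induction n; simpl; constructor; assumption. Qed.

Lemma conn_len_linked n : conn_len G L R s n -> linked (rep n) s.
Proof.
  intros [_ [w [[Hw|Hw] Hws]]]; apply strongly_connected_linked in Hws.
  - etransitivity; [symmetry; apply word_len_linked; eassumption|exact Hws].
  - assert (H : linked (Nat.iter n (gmul (inv l0)) s) s).
    { etransitivity; [symmetry; apply word_len_invset_linked; eassumption|exact Hws]. }
    apply (iter_linked (gmul l0) n) in H; [|intros; apply linked_mull; assumption].
    rewrite iter_cancel in H; [symmetry; exact H|intro; apply mulKVg].
Qed.

Lemma linked_conn_len n : 0 < n -> linked (rep n) s -> conn_len G L R s n.
Proof.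
  intros Hn H. split; [exact Hn|]. exists (Nat.iter n (gmul l0) 1). split.
  - left. apply word_len_iter_mulg.
  - apply strongly_connected_linked. rewrite iter_mulg_one. exact H.
Qed.

Lemma rep_linked_add i d : linked (rep i) (rep (i + d)) -> linked s (rep d).
Proof.
  intro H. unfold rep in H. rewrite Nat.iter_add in H.
  apply (iter_linked (gmul (inv l0)) i) in H; [|intros; apply linked_mulVl; assumption].
  rewrite !iter_cancel in H; [exact H| |]; intro; apply mulKg.
Qed.

Lemma rep_dcoset i : dcoset G L R s (rep i).
Proof.
  exists (Nat.iter i (gmul l0) 1), 1. split; [|split].
  - induction i; simpl; constructor; assumption.
  - constructor.
  - rewrite mulg1, iter_mulg_one. reflexivity.
Qed.

(* [l0^i s ~ l0^j s] with [i < j] makes [j - i] a connection length. *)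
Lemma rep_linked_inj k i j : (forall n, conn_len G L R s n -> k <= n) ->
  i < k -> j < k -> linked (rep i) (rep j) -> i = j.
Proof.
  intros Hmin.
  assert (Hlt : forall i j, i < j -> j < k -> ~ linked (rep i) (rep j)).
  { intros i' j' Hij Hj H. replace j' with (i' + (j' - i')) in H by lia.
    apply rep_linked_add in H. symmetry in H.
    apply linked_conn_len, Hmin in H; lia. }
  intros Hi Hj H. destruct (lt_eq_lt_dec i j) as [[Hij|Hij]|Hij]; [|assumption|].
  - exfalso. exact (Hlt i j Hij Hj H).
  - symmetry in H. exfalso. exact (Hlt j i Hij Hi H).
Qed.

Section Period.
Variable p : nat.
Hypothesis Hp : linked (rep (S p)) s.

Lemma rep_add_period j : linked (rep (j + S p)) (rep j).
Proof.
  unfold rep. rewrite Nat.iter_add.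
  apply iter_linked; [intros; apply linked_mull; assumption|exact Hp].
Qed.

Lemma rep_mod j : linked (rep (j mod S p)) (rep j).
Proof.
  assert (Hq : forall q r, linked (rep (S p * q + r)) (rep r)).
  { intros q r. induction q as [|q IH]; [rewrite Nat.mul_0_r; reflexivity|].
    replace (S p * S q + r) with (S p * q + r + S p) by lia.
    etransitivity; [apply rep_add_period|exact IH]. }
  rewrite (Nat.div_mod_eq j (S p)) at 2. symmetry. apply Hq.
Qed.

Lemma mulVl_rep j : linked (inv l0 ** rep j) (rep (j + p)).
Proof.
  etransitivity; [apply linked_mulVl; [assumption|symmetry; apply rep_add_period]|].
  rewrite Nat.add_succ_r. simpl. rewrite mulKg. reflexivity.
Qed.

Definition linked_to_rep x := exists j, linked x (rep j).

Lemma linked_to_rep_mull l x : L l -> linked_to_rep x -> linked_to_rep (l ** x).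
Proof.
  intros Hl [j Hj]. exists (S j).
  etransitivity; [apply linked_mull; eassumption|apply linked_mull_letters; assumption].
Qed.

Lemma linked_to_rep_mulVl l x : L l -> linked_to_rep x -> linked_to_rep (inv l ** x).
Proof.
  intros Hl [j Hj]. exists (j + p).
  etransitivity; [apply linked_mulVl; eassumption|].
  etransitivity; [apply (linked_mulVl_letters l l0); assumption|apply mulVl_rep].
Qed.

Lemma linked_to_rep_mulr r x : R r -> linked_to_rep x -> linked_to_rep (x ** r).
Proof.
  intros Hr [j Hj]. exists (S j).
  etransitivity; [apply linked_mulr; eassumption|symmetry; apply linked_mull_mulr; assumption].
Qed.

Lemma linked_to_rep_mulVr r x : R r -> linked_to_rep x -> linked_to_rep (x ** inv r).
Proof.
  intros Hr [j Hj]. exists (j + p).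
  etransitivity; [apply linked_mulVr; eassumption|].
  etransitivity; [apply (linked_mulVr_mulVl l0 r); assumption|apply mulVl_rep].
Qed.

Lemma linked_to_rep_genl a y : gen G L a -> linked_to_rep y -> linked_to_rep (a ** y).
Proof.
  induction 1; intro Hy; rewrite ?mul1g, <- ?mulgA;
    [|apply linked_to_rep_mull|apply linked_to_rep_mulVl]; auto.
Qed.

Lemma linked_to_rep_genr b : gen G R b -> forall y, linked_to_rep y -> linked_to_rep (y ** b).
Proof.
  induction 1; intros y Hy; rewrite ?mulg1, ?mulgA;
    [|apply IHgen, linked_to_rep_mulr|apply IHgen, linked_to_rep_mulVr]; auto.
Qed.

Lemma rep_cover x : dcoset G L R s x -> exists i, i < S p /\ linked (rep i) x.
Proof.
  intros [a [b [Ha [Hb ->]]]].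
  assert (Hx : linked_to_rep (a ** s ** b)).
  { rewrite <- mulgA. apply linked_to_rep_genl, linked_to_rep_genr; [assumption|assumption|].
    exists 0. reflexivity. }
  destruct Hx as [j Hj]. exists (j mod S p). split; [apply Nat.mod_upper_bound; lia|].
  rewrite Hj. apply rep_mod.
Qed.
End Period.

Lemma rep_scc_transport (T T' : G -> G) :
  (forall x, T' (T x) = x) -> (forall x, T (T' x) = x) ->
  (forall x y, linked x y -> linked (T x) (T y)) ->
  (forall x y, linked x y -> linked (T' x) (T' y)) ->
  (forall j, linked (T (rep j)) (rep (S j))) ->
  forall i j, i <= j ->
  exists (f : sig (scc G L R (rep i)) -> sig (scc G L R (rep j)))
         (f' : sig (scc G L R (rep j)) -> sig (scc G L R (rep i))),
    (forall u, f' (f u) = u) /\ (forall v, f (f' v) = v) /\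
    (forall u, proj1_sig (f u) = Nat.iter (j - i) T (proj1_sig u)).
Proof.
  intros HT'T HTT' HT HT' Hstep i j Hij.
  assert (Hshift : forall d, linked (Nat.iter d T (rep i)) (rep (d + i))).
  { induction d as [|d IH]; [reflexivity|].
    simpl. etransitivity; [apply HT, IH|apply Hstep]. }
  apply scc_transport with (Nat.iter (j - i) T'); intros; try apply iter_cancel; auto;
    try (apply iter_linked; auto).
  replace j with (j - i + i) at 2 by lia. apply Hshift.
Qed.

Lemma rep_scc_equipotent i j : equipotent G (scc G L R (rep i)) (scc G L R (rep j)).
Proof.
  assert (Hle : forall i j, i <= j -> equipotent G (scc G L R (rep i)) (scc G L R (rep j))).
  { intros i' j' Hij.
    destruct (rep_scc_transport (gmul l0) (gmul (inv l0))) with i' j'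
      as [f [f' [Hf'f [Hff' _]]]]; auto; try (intros; apply mulKg || apply mulKVg).
    - intros; apply linked_mull; assumption.
    - intros; apply linked_mulVl; assumption.
    - intro; reflexivity.
    - exists f, f'. auto. }
  destruct (le_ge_dec i j); [|apply equipotent_sym]; apply Hle; assumption.
Qed.

Lemma rep_scc_iso (T T' : G -> G) :
  (forall x, T' (T x) = x) -> (forall x, T (T' x) = x) ->
  (forall x y, arc G L R x y <-> arc G L R (T x) (T y)) ->
  (forall j, linked (T (rep j)) (rep (S j))) ->
  forall i j, digraph_iso G L R (scc G L R (rep i)) (scc G L R (rep j)).
Proof.
  intros HT'T HTT' HA Hstep.
  assert (Hle : forall i j, i <= j -> digraph_iso G L R (scc G L R (rep i)) (scc G L R (rep j))).
  { intros i j Hij.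
    destruct (rep_scc_transport T T') with i j as [f [f' [Hf'f [Hff' Hf]]]]; auto.
    - apply linked_map. intros x y. apply HA.
    - apply linked_map. intros x y Hxy. apply HA. rewrite !HTT'. exact Hxy.
    - exists f, f'. split; [|split]; auto. intros u v. rewrite !Hf. apply iter_arc, HA. }
  intros i j. destruct (le_ge_dec i j); [|apply digraph_iso_sym]; apply Hle; assumption.
Qed.

Lemma rep_scc_iso_of_normalizer :
  (exists l, L l /\ normalizer G L l) \/ (exists r, R r /\ normalizer G R r) ->
  forall i j, digraph_iso G L R (scc G L R (rep i)) (scc G L R (rep j)).
Proof.
  intros [[g [Hg HN]]|[g [Hg HN]]].
  - apply (rep_scc_iso (gmul g) (gmul (inv g))); intros; try apply mulKg; try apply mulKVg.
    + apply arc_mull_normalizer, HN.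
    + apply linked_mull_letters; assumption.
  - apply (rep_scc_iso (fun x => x ** g) (fun x => x ** inv g)); intros; try apply mulgK; try apply mulgKV.
    + apply arc_mulr_normalizer, HN.
    + symmetry. apply linked_mull_mulr; assumption.
Qed.
End Representatives.
End Linking.
End TwoSidedGroupDigraph.

Theorem mainTheorem17 (G : group) (L R : G -> Prop) (s : G)
  (hL : exists l, L l) (hR : exists r, R r)
  (hWL : is_subgroup G (Wd G L)) (hWR : is_subgroup G (Wd G R)) :
  (forall x y, dcoset G L R s x -> strongly_connected G L R x y -> dcoset G L R s y) /\
  (forall k, min_conn_len G L R s k ->
     exists f : nat -> G,
       (forall i, i < k -> dcoset G L R s (f i)) /\
       (forall i j, i < k -> j < k -> strongly_connected G L R (f i) (f j) -> i = j) /\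
       (forall x, dcoset G L R s x -> exists i, i < k /\ strongly_connected G L R (f i) x) /\
       (forall i j, i < k -> j < k -> equipotent G (scc G L R (f i)) (scc G L R (f j))) /\
       ((exists l, L l /\ normalizer G L l) \/ (exists r, R r /\ normalizer G R r) ->
        forall i j, i < k -> j < k ->
          digraph_iso G L R (scc G L R (f i)) (scc G L R (f j)))) /\
  (conn_len_infinite G L R s ->
     forall n, exists f : nat -> G,
       (forall i, i < n -> dcoset G L R s (f i)) /\
       (forall i j, i < n -> j < n -> strongly_connected G L R (f i) (f j) -> i = j)).
Proof.
  destruct hL as [l0 Hl0], hR as [r0 Hr0].
  pose proof (strongly_connected_linked G L R hWL hWR) as Hsc.
  split; [|split].
  - intros x y Hx Hxy. apply dcoset_linked with x; [|apply Hsc]; assumption.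
  - intros k [Hk Hmin]. exists (rep G l0 s).
    pose proof (conn_len_linked G L R hWL hWR l0 r0 s Hl0 Hr0 k Hk) as Hper.
    destruct k as [|p]; [destruct Hk; lia|].
    split; [|split; [|split; [|split]]].
    + intros i _. apply rep_dcoset; assumption.
    + intros i j Hi Hj Hij. apply Hsc in Hij.
      apply (rep_linked_inj G L R hWL hWR l0 s Hl0 (S p)); assumption.
    + intros x Hx.
      destruct (rep_cover G L R hWL hWR l0 r0 s Hl0 Hr0 p Hper x Hx) as [i [Hi Hix]].
      exists i. split; [|apply Hsc]; assumption.
    + intros i j _ _. apply rep_scc_equipotent; assumption.
    + intros HN i j _ _. apply rep_scc_iso_of_normalizer with r0; assumption.
  - intros Hinf n. exists (rep G l0 s). split; [intros i _; apply rep_dcoset; assumption|].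
    intros i j Hi Hj Hij. apply Hsc in Hij.
    apply (rep_linked_inj G L R hWL hWR l0 s Hl0 n); try assumption.
    intros m Hm. destruct (Hinf m Hm).
Qed.
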